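(* Let $k=\mathbb{F}_3$, let $O_7(k)$ be the group of $7\times7$ matrices over $k$ orthogonal for the bilinear form $\langle x,y\rangle=x_1y_7+x_2y_6+\dots+x_7y_1$ on $k^7$, and let \[ A=\begin{pmatrix} 0&0&1&0&0&1&0\\ 1&0&0&0&0&0&1\\ 0&1&0&0&0&0&0\\ 0&0&0&0&0&0&0\\ 0&1&0&0&0&0&1\\ 0&0&1&0&1&0&0\\ 0&0&0&0&0&1&0 \end{pmatrix}. \] Then there is no $g\in O_7(k)$ such that the matrix $M=g^{-1}Ag$ satisfies $M_{ij}=0$ for all $(i,j)$ in \[ \{(3,1),(4,1),(5,1),(5,2),(6,1),(6,2),(6,3),(7,1),(7,2),(7,3),(7,4),(7,5)\} \] (with the remaining entries arbitrary).
   Context: $M_{ij}$ denotes the entry in row $i$ and column $j$. *)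

(* Indices are 0-based: paper's index i corresponds to i-1. *)
From mathcomp Require Import all_boot all_order all_algebra.
Set Implicit Arguments. Unset Strict Implicit. Unset Printing Implicit Defensive.
Import GRing.Theory.
Local Open Scope ring_scope.

Definition k3 := 'F_3.

Definition Jform : 'M[k3]_7 := \matrix_(i < 7, j < 7) ((i + j)%N == 6%N)%:R.

Definition in_O7 (g : 'M[k3]_7) : bool :=
  (g \in unitmx) && (g^T *m Jform *m g == Jform).

Definition rowsA : seq (seq nat) :=
  [:: [:: 0; 0; 1; 0; 0; 1; 0];
      [:: 1; 0; 0; 0; 0; 0; 1];
      [:: 0; 1; 0; 0; 0; 0; 0];
      [:: 0; 0; 0; 0; 0; 0; 0];
      [:: 0; 1; 0; 0; 0; 0; 1];
      [:: 0; 0; 1; 0; 1; 0; 0];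
      [:: 0; 0; 0; 0; 0; 1; 0]]%N.

Definition Amat : 'M[k3]_7 :=
  \matrix_(i < 7, j < 7) (nth 0%N (nth [::] rowsA i) j)%:R.

Definition zero_pos : seq (nat * nat) :=
  [:: (2,0); (3,0); (4,0); (4,1); (5,0); (5,1); (5,2);
      (6,0); (6,1); (6,2); (6,3); (6,4)]%N.

From HB Require Import structures.
From mathcomp Require Import all_boot all_order all_algebra zify.
Set Implicit Arguments. Unset Strict Implicit. Unset Printing Implicit Defensive.
Import GRing.Theory.
Local Open Scope ring_scope.

(* Let u, v, w be the first three columns of g.  As g preserves the form and
   A is self-adjoint for it (A^T J = J A), the vanishing pattern of g^-1 A g
   implies that u, v, w are linearly independent and span a totally
   isotropic subspace, that A u lies in <u, v>, and that A v is orthogonal to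
   v and w.  An exhaustive search over F_3^7 shows that no such triple exists;
   it is run by the VM on a computable copy [F3] of F_3, which is transported
   to ['F_3] through the ring isomorphism [toK]. *)

Definition form (x y : 'cV[k3]_7) : k3 := (x^T *m Jform *m y) 0 0.

Lemma Jform_entry (i j : 'I_7) : Jform i j = (j == rev_ord i)%:R.
Proof.
rewrite mxE; congr (_%:R); rewrite -val_eqE /=.
by apply/eqP/eqP; have := ltn_ord i; lia.
Qed.

Lemma trmx_Jform : Jform^T = Jform.
Proof. by apply/matrixP => i j; rewrite !mxE addnC. Qed.

Lemma Jform_mulmx m (X : 'M[k3]_(7, m)) i j : (Jform *m X) i j = X (rev_ord i) j.
Proof.
rewrite mxE (bigD1 (rev_ord i)) //= big1 => [|k k_ne]; rewrite Jform_entry.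
  by rewrite eqxx mul1r addr0.
by rewrite (negPf k_ne) mul0r.
Qed.

Lemma form_rev x y : form x y = \sum_(i < 7) x i 0 * y (rev_ord i) 0.
Proof. by rewrite /form -mulmxA mxE; apply: eq_bigr => i _; rewrite Jform_mulmx mxE. Qed.

Lemma form_col (X Y : 'M[k3]_7) i j :
  form (col i X) (col j Y) = (X^T *m Jform *m Y) i j.
Proof.
have -> : (X^T *m Jform *m Y) i j
    = (delta_mx (0 : 'I_1) i *m (X^T *m Jform *m Y) *m delta_mx j (0 : 'I_1)) 0 0.
  by rewrite -rowE -colE !mxE.
by rewrite /form !colE trmx_mul trmx_delta !mulmxA.
Qed.

Lemma Amat_persymmetric : Amat^T *m Jform = Jform *m Amat.
Proof.
rewrite -[Jform in LHS]trmx_Jform -trmx_mul; apply/matrixP => i j.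
rewrite mxE !Jform_mulmx !mxE.
by case: i j => [[|[|[|[|[|[|[|?]]]]]]] ?] [[|[|[|[|[|[|[|?]]]]]]] ?].
Qed.

Lemma unitmx_col_neq (R : comUnitRingType) n (g : 'M[R]_n) i (x : 'cV_n) :
  g \in unitmx -> x i 0 = 0 -> col i g != g *m x.
Proof.
move=> g_unit xi0; apply/eqP => /(congr1 (mulmx (invmx g))).
rewrite colE !mulKmx // => /matrixP/(_ i 0); rewrite xi0 mxE !eqxx => /eqP.
by rewrite oner_eq0.
Qed.

Section OrthogonalConjugate.

Variable g : 'M[k3]_7.
Hypotheses (g_unit : g \in unitmx) (g_orth : g^T *m Jform *m g = Jform).
Let M := invmx g *m Amat *m g.

Lemma mul_g_conj : g *m M = Amat *m g.
Proof. by rewrite /M !mulmxA mulmxV // mul1mx. Qed.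

Lemma form_cols i j : form (col i g) (col j g) = Jform i j.
Proof. by rewrite form_col g_orth. Qed.

Lemma form_Amat_cols i j : form (Amat *m col i g) (col j g) = M (rev_ord i) j.
Proof.
rewrite colE mulmxA -colE form_col trmx_mul -(mulmxA g^T) Amat_persymmetric.
by rewrite mulmxA -(mulmxA _ Amat) -mul_g_conj mulmxA g_orth Jform_mulmx.
Qed.

Hypothesis M_zero :
  forall i j : 'I_7, ((i : nat), (j : nat)) \in zero_pos -> M i j = 0.

Lemma Amat_col0 : Amat *m col 0 g = M 0 0 *: col 0 g + M 1 0 *: col 1 g.
Proof.
rewrite !colE mulmxA -mul_g_conj -mulmxA !scalemxAr -mulmxDr -colE.
congr (g *m _); clearbody M; apply/matrixP => i j; rewrite (ord1 j) !mxE.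
case: i => [[|[|[|[|[|[|[|?]]]]]]] ?] //=; rewrite ?mulr1 ?mulr0 ?addr0 ?add0r;
  by [congr (M _ _); apply: val_inj | rewrite M_zero].
Qed.

End OrthogonalConjugate.

Inductive F3 : Type := F0 | F1 | F2.

Definition eqF3 (x y : F3) : bool :=
  match x, y with F0, F0 | F1, F1 | F2, F2 => true | _, _ => false end.

Lemma eqF3P : Equality.axiom eqF3.
Proof. by case; case; constructor. Qed.

HB.instance Definition _ := hasDecEq.Build F3 eqF3P.

Definition addF (x y : F3) : F3 :=
  match x, y with
  | F0, z | z, F0 => z
  | F1, F1 => F2
  | F2, F2 => F1
  | _, _ => F0
  end.

Definition mulF (x y : F3) : F3 :=
  match x, y with
  | F0, _ | _, F0 => F0
  | F1, z | z, F1 => z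
  | F2, F2 => F1
  end.

Definition toK (x : F3) : k3 := match x with F0 => 0 | F1 => 1 | F2 => -1 end.

Definition ofK (x : k3) : F3 := match val x with 0 => F0 | 1 => F1 | _ => F2 end%N.

Lemma toKD x y : toK (addF x y) = toK x + toK y.
Proof. by case: x; case: y; apply/eqP. Qed.

Lemma toKM x y : toK (mulF x y) = toK x * toK y.
Proof. by case: x; case: y; apply/eqP. Qed.

Lemma toK_inj : injective toK.
Proof. by case; case => // /eqP. Qed.

Lemma ofKK : cancel ofK toK.
Proof. by case=> [[|[|[|m]]] lt_m3] //; apply: val_inj. Qed.

Definition natF (n : nat) : F3 := iter n (addF F1) F0.

Lemma toK_natF n : toK (natF n) = n%:R.
Proof. by elim: n => // n IHn; rewrite /natF iterS toKD IHn [RHS]mulrS. Qed.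

Definition sumF (f : nat -> F3) : F3 := foldr addF F0 (mkseq f 7).

Lemma toK_foldr (s : seq F3) : toK (foldr addF F0 s) = \sum_(x <- s) toK x.
Proof. by elim: s => [|x s IHs]; rewrite ?big_nil // big_cons -IHs -toKD. Qed.

Lemma toK_sumF f : toK (sumF f) = \sum_(i < 7) toK (f i).
Proof. by rewrite toK_foldr big_map -val_enum_ord big_map enumT. Qed.

Definition toV (u : seq F3) : 'cV[k3]_7 := \col_i toK (nth F0 u i).

Definition ofV (x : 'cV[k3]_7) : seq F3 := mkseq (fun i => ofK (x (inord i) 0)) 7.

Lemma size_ofV x : size (ofV x) = 7%N.
Proof. exact: size_mkseq. Qed.

Lemma ofVK : cancel ofV toV.
Proof.
by move=> x; apply/matrixP => i j; rewrite !mxE nth_mkseq // inord_val ofKK (ord1 j).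
Qed.

Lemma toV_inj u v : size u = 7%N -> size v = 7%N -> toV u = toV v -> u = v.
Proof.
move=> size_u size_v /matrixP eq_uv.
apply: (@eq_from_nth _ F0); rewrite size_u ?size_v //.
by move=> i lt_i7; apply: toK_inj; have := eq_uv (Ordinal lt_i7) 0; rewrite !mxE.
Qed.

Lemma toV_mkseq f : toV (mkseq f 7) = \col_(i < 7) toK (f i).
Proof. by apply/matrixP => i j; rewrite !mxE nth_mkseq. Qed.

Lemma toV_zero : toV (nseq 7 F0) = 0.
Proof. by apply/matrixP => i j; rewrite !mxE nth_nseq if_same. Qed.

Definition scaleF (c : F3) (u : seq F3) : seq F3 :=
  mkseq (fun i => mulF c (nth F0 u i)) 7.

Definition addvF (u v : seq F3) : seq F3 :=
  mkseq (fun i => addF (nth F0 u i) (nth F0 v i)) 7.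

Lemma toV_scaleF c u : toV (scaleF c u) = toK c *: toV u.
Proof. by rewrite toV_mkseq; apply/matrixP => i j; rewrite !mxE toKM. Qed.

Lemma toV_addvF u v : toV (addvF u v) = toV u + toV v.
Proof. by rewrite toV_mkseq; apply/matrixP => i j; rewrite !mxE toKD. Qed.

Definition mulAF (u : seq F3) : seq F3 :=
  mkseq (fun i =>
    sumF (fun j => mulF (natF (nth 0 (nth [::] rowsA i) j)) (nth F0 u j)))%N 7.

Lemma Amat_toV u : Amat *m toV u = toV (mulAF u).
Proof.
rewrite toV_mkseq; apply/matrixP => i j; rewrite !mxE toK_sumF.
by apply: eq_bigr => k _; rewrite !mxE toKM toK_natF.
Qed.

Definition formF (u v : seq F3) : F3 :=
  sumF (fun i => mulF (nth F0 u i) (nth F0 v (6 - i)))%N.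

Lemma form_toV u v : form (toV u) (toV v) = toK (formF u v).
Proof. by rewrite form_rev toK_sumF; apply: eq_bigr => i _; rewrite toKM !mxE. Qed.

Definition F3_elems : seq F3 := [:: F0; F1; F2].

Lemma mem_F3_elems x : x \in F3_elems.
Proof. by case: x. Qed.

Fixpoint forall_vec (n : nat) (P : seq F3 -> bool) : bool :=
  if n is m.+1 then all (fun a => forall_vec m (fun u => P (a :: u))) F3_elems
  else P [::].

Lemma forall_vecP n P u : forall_vec n P -> size u = n -> P u.
Proof.
elim: n P u => [|n IHn] P u; first by move=> P0 /size0nil->.
case: u => [|a u] // /allP all_P [size_u].
exact: IHn (all_P a (mem_F3_elems a)) size_u.
Qed.

Definition exists_coef (P : F3 -> bool) : bool := has P F3_elems.

Lemma exists_coefP (P : F3 -> bool) : reflect (exists c, P c) (exists_coef P).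
Proof.
apply: (iffP hasP) => [[c _ Pc] | [c Pc]]; first by exists c.
by exists c; first exact: mem_F3_elems.
Qed.

Definition orthF (u v : seq F3) : bool := formF u v == F0.
Definition in_lineF (u v : seq F3) : bool := exists_coef (fun c => v == scaleF c u).
Definition in_planeF (u v w : seq F3) : bool :=
  exists_coef (fun c => exists_coef (fun d => w == addvF (scaleF c u) (scaleF d v))).

(* The VM evaluates the arguments of [andb] and [implb] eagerly; unfolding
   them into [if]s is what lets the search below prune. *)
Definition flag1F (u : seq F3) : bool := Eval cbv delta [andb] beta in
  (u != nseq 7 F0) && orthF u u.

Definition flag2F (u v : seq F3) : bool := Eval cbv delta [andb] beta in
  [&& orthF u v, orthF v v, orthF (mulAF v) v, ~~ in_lineF u v
    & in_planeF u v (mulAF u)].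

Definition flag3F (u v w : seq F3) : bool := Eval cbv delta [andb] beta in
  [&& orthF u w, orthF v w, orthF w w, orthF (mulAF v) w & ~~ in_planeF u v w].

Definition no_flagF : bool := Eval cbv delta [implb] beta in
  forall_vec 7 (fun u => flag1F u ==>
    forall_vec 7 (fun v => flag2F u v ==>
      forall_vec 7 (fun w => ~~ flag3F u v w))).

Lemma no_flagF_true : no_flagF.
Proof. by vm_compute. Qed.

Lemma no_flagF_sound u v w : size u = 7%N -> size v = 7%N -> size w = 7%N ->
  flag1F u -> flag2F u v -> ~~ flag3F u v w.
Proof.
move=> size_u size_v size_w flag1 flag2.
have := forall_vecP no_flagF_true size_u; cbv beta; rewrite flag1.
move=> /forall_vecP/(_ size_v); cbv beta; rewrite flag2.
by move=> /forall_vecP/(_ size_w).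
Qed.

Lemma no_isotropic_flag (u v w : 'cV[k3]_7) :
  u != 0 -> form u u = 0 ->
  form u v = 0 -> form v v = 0 -> form (Amat *m v) v = 0 ->
  (forall c, v != c *: u) -> (exists a b, Amat *m u = a *: u + b *: v) ->
  form u w = 0 -> form v w = 0 -> form w w = 0 -> form (Amat *m v) w = 0 ->
  (forall c d, w != c *: u + d *: v) -> False.
Proof.
rewrite -[u]ofVK -[v]ofVK -[w]ofVK.
move: (ofV u) (ofV v) (ofV w) (size_ofV u) (size_ofV v) (size_ofV w).
move=> {}u {}v {}w size_u size_v size_w; rewrite !Amat_toV.
have orth x y : form (toV x) (toV y) = 0 -> orthF x y.
  by rewrite /orthF form_toV -[0]/(toK F0) => /toK_inj ->.
move=> nz_u /orth uu /orth uv /orth vv /orth Avv v_line [a [b Au]].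
move=> /orth uw /orth vw /orth ww /orth Avw w_plane.
have nz_uF : u != nseq 7 F0 by apply: contra_neq nz_u => ->; rewrite toV_zero.
have /negPf v_lineF : ~~ in_lineF u v.
  apply/exists_coefP => -[c /eqP v_cu].
  by have := v_line (toK c); rewrite v_cu toV_scaleF eqxx.
have /negPf w_planeF : ~~ in_planeF u v w.
  apply/exists_coefP => -[c /exists_coefP [d /eqP w_cd]].
  by have := w_plane (toK c) (toK d); rewrite w_cd toV_addvF !toV_scaleF eqxx.
have Au_plane : in_planeF u v (mulAF u).
  apply/exists_coefP; exists (ofK a); apply/exists_coefP; exists (ofK b).
  apply/eqP/toV_inj; rewrite ?size_mkseq // Au.
  by rewrite toV_addvF !toV_scaleF !ofKK.
have := no_flagF_sound size_u size_v size_w.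
rewrite /flag1F /flag2F /flag3F nz_uF uu uv vv Avv v_lineF Au_plane uw vw ww Avw w_planeF.
by move/(_ isT isT).
Qed.

Theorem lemma2p2 :
  ~ exists g : 'M[k3]_7, in_O7 g /\
      (forall i j : 'I_7, ((i : nat), (j : nat)) \in zero_pos ->
         (invmx g *m Amat *m g) i j = 0).
Proof.
move=> [g [/andP [g_unit /eqP g_orth] M_zero]].
have formg := form_cols g_orth.
have formAg := form_Amat_cols g_unit g_orth.
have cols_free i (x : 'cV_7) : x i 0 = 0 -> col i g != g *m x.
  exact: unitmx_col_neq.
apply: (@no_isotropic_flag (col 0 g) (col 1 g) (col 2 g)).
- by rewrite -(mulmx0 _ g) cols_free ?mxE.
- by rewrite formg mxE.
- by rewrite formg mxE.
- by rewrite formg mxE.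
- by rewrite formAg M_zero.
- move=> c; rewrite [col 0 g]colE scalemxAr.
  by rewrite cols_free // !mxE /= mulr0.
- by eexists; eexists; apply: Amat_col0 g_unit M_zero.
- by rewrite formg mxE.
- by rewrite formg mxE.
- by rewrite formg mxE.
- by rewrite formAg M_zero.
- move=> c d; rewrite [col 0 g]colE [col 1 g]colE !scalemxAr -mulmxDr.
  by rewrite cols_free // !mxE /= !mulr0 addr0.
Qed.
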